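(* Let $n\ge1$. Suppose that to each ordered orthonormal basis $(v_1,\dots,v_{n+1})$ of $\mathbb{R}^{n+1}$ there is assigned a number $\epsilon=\epsilon(v_1,\dots,v_{n+1})>0$, and let $B_{v_1,\dots,v_{n+1}}=A_{v_1,\dots,v_{n+1},\epsilon(v_1,\dots,v_{n+1})}$. Then there is a finite collection $B_1,\dots,B_N$ of such sets, each of the form $B_{v_1,\dots,v_{n+1}}$, such that $\{x\in\mathbb{R}^{n+1}:|x|\le1\}\subset\bigcup_{i=1}^NB_i$.
   Context: For mutually orthogonal unit vectors $v_1,\dots,v_{n+1}\in\mathbb{R}^{n+1}$ and $\epsilon>0$, $A_{v_1,\dots,v_{n+1},\epsilon}=\{c_1v_1+\dots+c_{n+1}v_{n+1}: |c_1|\le1,\ |c_{i+1}|\le\epsilon|c_i|\text{ for all }1\le i\le n\}$. *)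

From Stdlib Require Export Reals List.
Open Scope R_scope.

(* A vector of R^(n+1) is a function nat -> R; only coordinates 0..n matter. *)
Definition vec := nat -> R.

Definition dot (n : nat) (u v : vec) : R := sum_f_R0 (fun k => u k * v k) n.

Definition norm (n : nat) (x : vec) : R := sqrt (dot n x x).

(* An ordered basis (v_1,...,v_{n+1}) is represented by b : nat -> vec,
   with v_{i+1} = b i for i = 0..n. *)
Definition orthonormal (n : nat) (b : nat -> vec) : Prop :=
  forall i j : nat, (i <= n)%nat -> (j <= n)%nat ->
    dot n (b i) (b j) = if Nat.eqb i j then 1 else 0.

(* A_{v_1,...,v_{n+1},eps} = { c_1 v_1 + ... + c_{n+1} v_{n+1} :
     |c_1| <= 1, |c_{i+1}| <= eps |c_i| for 1 <= i <= n }  (0-indexed here). *)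
Definition A_set (n : nat) (b : nat -> vec) (eps : R) (x : vec) : Prop :=
  exists c : nat -> R,
    Rabs (c 0%nat) <= 1 /\
    (forall i : nat, (i < n)%nat -> Rabs (c (S i)) <= eps * Rabs (c i)) /\
    (forall k : nat, (k <= n)%nat -> x k = sum_f_R0 (fun i => c i * b i k) n).

(* A Householder reflection completes a unit vector u to an
   orthonormal basis (u, g_1, ..., g_m); the induction hypothesis, applied to the
   coordinates along the g_j with eps'(h) := eps(u, h), yields finitely many frames h, and
   delta(u) is the least of the finitely many values eps'(h).  If x lies in the cone
   |x|^2 <= (1 + delta(u)^2) <u,x>^2 around the line of u, its component orthogonal to u
   has length at most delta(u) |<u,x>|, which bounds its first coefficient in the frame h
   by eps |c_1| with c_1 = <u,x>.  By compactness of the sphere finitely many such cones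
   cover every direction. *)

From Stdlib Require Import Reals Lra Lia Psatz List Classical ClassicalEpsilon.
From Coquelicot Require Compactness.
Open Scope R_scope.

Definition kronecker (i j : nat) : R := if Nat.eqb i j then 1 else 0.

Lemma kronecker_diag i : kronecker i i = 1.
Proof. unfold kronecker; now rewrite Nat.eqb_refl. Qed.

Lemma kronecker_neq i j : i <> j -> kronecker i j = 0.
Proof. intro Hij; unfold kronecker; apply Nat.eqb_neq in Hij; now rewrite Hij. Qed.

Lemma kronecker_comm i j : kronecker i j = kronecker j i.
Proof. unfold kronecker; now rewrite Nat.eqb_sym. Qed.

Lemma sum_kronecker_l f m i :
  (i <= m)%nat -> sum_f_R0 (fun k => kronecker i k * f k) m = f i.
Proof.
  induction m as [|m IH]; intro Hi; simpl.
  - replace i with 0%nat by lia. rewrite kronecker_diag; ring.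
  - destruct (Nat.eq_dec i (S m)) as [->|Hne].
    + rewrite sum_eq_R0, kronecker_diag; [ring|].
      intros k Hk; rewrite kronecker_neq by lia; ring.
    + rewrite IH, kronecker_neq by lia; ring.
Qed.

Lemma sum_swap (F : nat -> nat -> R) n m :
  sum_f_R0 (fun i => sum_f_R0 (fun j => F i j) m) n =
  sum_f_R0 (fun j => sum_f_R0 (fun i => F i j) n) m.
Proof. induction n as [|n IH]; simpl; [reflexivity|]. now rewrite IH, <- sum_plus. Qed.

Lemma sum_scal_l a f m : sum_f_R0 (fun i => a * f i) m = a * sum_f_R0 f m.
Proof. rewrite scal_sum; apply sum_eq; intros; ring. Qed.

Lemma sum_ge_term f m i :
  (forall j, 0 <= f j) -> (i <= m)%nat -> f i <= sum_f_R0 f m.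
Proof.
  intros Hf; induction m as [|m IH]; intro Hi; simpl.
  - replace i with 0%nat by lia; lra.
  - destruct (Nat.eq_dec i (S m)) as [->|Hne].
    + pose proof (cond_pos_sum f m Hf); lra.
    + pose proof (IH ltac:(lia)); pose proof (Hf (S m)); lra.
Qed.

Lemma Rabs_le_of_sq x y : x * x <= y * y -> 0 <= y -> Rabs x <= y.
Proof. intros; unfold Rabs; destruct (Rcase_abs x); nra. Qed.

Lemma Rabs_le_bounds x y : Rabs x <= y -> - y <= x <= y.
Proof. unfold Rabs; destruct (Rcase_abs x); lra. Qed.

Lemma dot_comm n u v : dot n u v = dot n v u.
Proof. unfold dot; apply sum_eq; intros; ring. Qed.

Lemma dot_self_ge0 n x : 0 <= dot n x x.
Proof. apply cond_pos_sum; intro; nra. Qed.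

Lemma coord_sq_le_dot n x i : (i <= n)%nat -> x i * x i <= dot n x x.
Proof. apply (sum_ge_term (fun k => x k * x k)); intro; nra. Qed.

Lemma dot_ext n u u' v v' :
  (forall k, (k <= n)%nat -> u k = u' k) -> (forall k, (k <= n)%nat -> v k = v' k) ->
  dot n u v = dot n u' v'.
Proof. intros Hu Hv; unfold dot; apply sum_eq; intros; now rewrite Hu, Hv. Qed.

Lemma dot_S n u v :
  dot (S n) u v = u 0%nat * v 0%nat + dot n (fun k => u (S k)) (fun k => v (S k)).
Proof. unfold dot; now rewrite decomp_sum by lia. Qed.

Definition lin_comb (m : nat) (c : nat -> R) (b : nat -> vec) : vec :=
  fun k => sum_f_R0 (fun i => c i * b i k) m.

Definition orthonormal_family (n m : nat) (b : nat -> vec) : Prop :=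
  forall i j, (i <= m)%nat -> (j <= m)%nat -> dot n (b i) (b j) = kronecker i j.

Lemma lin_comb_ext m c c' b k :
  (forall i, (i <= m)%nat -> c i = c' i) -> lin_comb m c b k = lin_comb m c' b k.
Proof. intro Hc; unfold lin_comb; apply sum_eq; intros; now rewrite Hc. Qed.

Lemma lin_comb_S m c b k :
  lin_comb (S m) c b k =
  c 0%nat * b 0%nat k + lin_comb m (fun i => c (S i)) (fun i => b (S i)) k.
Proof. unfold lin_comb; now rewrite decomp_sum by lia. Qed.

Lemma lin_comb_lin_comb m p c B f k :
  lin_comb p (lin_comb m c B) f k = lin_comb m c (fun i => lin_comb p (B i) f) k.
Proof.
  unfold lin_comb.
  transitivity (sum_f_R0 (fun j => sum_f_R0 (fun i => c i * (B i j * f j k)) m) p).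
  - apply sum_eq; intros j _. rewrite Rmult_comm, scal_sum. apply sum_eq; intros; ring.
  - rewrite sum_swap. apply sum_eq; intros i _. rewrite scal_sum. apply sum_eq; intros; ring.
Qed.

Lemma dot_lin_comb_r n m v c b :
  dot n v (lin_comb m c b) = sum_f_R0 (fun i => c i * dot n v (b i)) m.
Proof.
  unfold dot, lin_comb.
  transitivity (sum_f_R0 (fun k => sum_f_R0 (fun i => c i * (v k * b i k)) m) n).
  - apply sum_eq; intros k _. rewrite scal_sum. apply sum_eq; intros; ring.
  - rewrite sum_swap. apply sum_eq; intros i _. rewrite scal_sum. apply sum_eq; intros; ring.
Qed.

Lemma dot_basis_lin_comb n m b c j :
  orthonormal_family n m b -> (j <= m)%nat -> dot n (b j) (lin_comb m c b) = c j.
Proof.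
  intros Hb Hj. rewrite dot_lin_comb_r.
  rewrite (sum_eq _ (fun i => kronecker j i * c i)) by (intros; rewrite Hb by lia; ring).
  now apply sum_kronecker_l.
Qed.

Lemma dot_lin_comb_orthonormal n m b c d :
  orthonormal_family n m b -> dot n (lin_comb m c b) (lin_comb m d b) = dot m c d.
Proof.
  intro Hb. rewrite dot_lin_comb_r. unfold dot at 2. apply sum_eq; intros j Hj.
  rewrite dot_comm, dot_basis_lin_comb by assumption; ring.
Qed.

Definition reflect_dir (u : vec) : vec := fun i => u i - kronecker 0 i.

(* Reflection in the hyperplane orthogonal to u - e_0, which swaps e_0 and u.  When
   u = e_0 the direction u - e_0 vanishes, so the junk division by 1 - u_0 = 0 does no
   harm and the matrix is the identity. *)
Definition householder (u : vec) (i j : nat) : R :=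
  kronecker i j - reflect_dir u i * reflect_dir u j / (1 - u 0%nat).

Definition householder_col (u : vec) (j : nat) : vec := fun k => householder u k j.

Lemma householder_sym u i j : householder u i j = householder u j i.
Proof. unfold householder, Rdiv; rewrite kronecker_comm; ring. Qed.

Section Householder.

Variables (K : nat) (u : vec).
Hypothesis u_unit : dot K u u = 1.

Lemma dot_reflect_dir : dot K (reflect_dir u) (reflect_dir u) = 2 * (1 - u 0%nat).
Proof.
  unfold dot, reflect_dir.
  rewrite (sum_eq _ (fun i => u i * u i + (-2) * (kronecker 0 i * u i) + kronecker 0 i * kronecker 0 i))
    by (intros; ring).
  rewrite !sum_plus, sum_scal_l, !sum_kronecker_l by lia.
  unfold dot in u_unit; rewrite u_unit, kronecker_diag; ring.
Qed.

Lemma reflect_dir_zero : u 0%nat = 1 -> forall i, (i <= K)%nat -> reflect_dir u i = 0.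
Proof.
  intros Hu0 i Hi.
  assert (H := coord_sq_le_dot K (reflect_dir u) i Hi).
  rewrite dot_reflect_dir, Hu0 in H. nra.
Qed.

Lemma householder_col0 i : (i <= K)%nat -> householder u i 0 = u i.
Proof.
  intro Hi. unfold householder.
  destruct (Req_dec (u 0%nat) 1) as [Hu0|Hu0].
  - pose proof (reflect_dir_zero Hu0 i Hi) as Hw. rewrite Hw.
    unfold reflect_dir in Hw. rewrite kronecker_comm in Hw. lra.
  - unfold reflect_dir at 2. rewrite kronecker_diag, kronecker_comm.
    unfold reflect_dir. field. lra.
Qed.

Lemma householder_mul_self i j : (i <= K)%nat -> (j <= K)%nat ->
  sum_f_R0 (fun k => householder u i k * householder u k j) K = kronecker i j.
Proof.
  intros Hi Hj. unfold householder.
  destruct (Req_dec (u 0%nat) 1) as [Hu0|Hu0].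
  - rewrite (sum_eq _ (fun k => kronecker i k * kronecker k j)).
    + now apply (sum_kronecker_l (fun k => kronecker k j)).
    + intros k Hk. rewrite (reflect_dir_zero Hu0 k Hk). unfold Rdiv; ring.
  - set (s := 1 - u 0%nat). set (w := reflect_dir u).
    rewrite (sum_eq _ (fun k => kronecker i k * kronecker k j + (- w j / s) * (kronecker i k * w k)
                               + (- w i / s) * (kronecker j k * w k) + (w i * w j / (s * s)) * (w k * w k))).
    + rewrite !sum_plus, !sum_scal_l.
      rewrite (sum_kronecker_l (fun k => kronecker k j)), !sum_kronecker_l by assumption.
      change (sum_f_R0 (fun k => w k * w k) K) with (dot K w w).
      unfold w; rewrite dot_reflect_dir. unfold s. field. lra.
    + intros k _. rewrite (kronecker_comm k j). field. unfold s; lra.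
Qed.

Lemma orthonormal_householder : orthonormal_family K K (householder_col u).
Proof.
  intros i j Hi Hj. unfold dot, householder_col.
  rewrite <- householder_mul_self by assumption.
  apply sum_eq; intros k _; now rewrite (householder_sym u k i).
Qed.

Lemma householder_expand x k : (k <= K)%nat ->
  x k = lin_comb K (fun j => dot K (householder_col u j) x) (householder_col u) k.
Proof.
  intro Hk.
  rewrite (lin_comb_ext K _ (lin_comb K x (householder_col u))) by
    (intros j _; unfold dot, lin_comb, householder_col; apply sum_eq; intros l _;
     rewrite (householder_sym u l j); ring).
  rewrite lin_comb_lin_comb. unfold lin_comb.
  rewrite (sum_eq _ (fun l => kronecker k l * x l)).
  - symmetry; now apply sum_kronecker_l.
  - intros l Hl. rewrite <- (householder_mul_self k l) by assumption.
    rewrite Rmult_comm. f_equal. apply sum_eq; intros j _.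
    unfold householder_col; rewrite (householder_sym u j l); ring.
Qed.

End Householder.

(* For unit u: x makes an angle of at most arctan delta with the line through u. *)
Definition in_cone (K : nat) (delta : R) (u x : vec) : Prop :=
  dot K u u * dot K x x <= (1 + delta * delta) * (dot K u x * dot K u x).

Lemma in_cone_comm K delta u x : in_cone K delta u x -> in_cone K delta x u.
Proof. unfold in_cone; intro H; rewrite (dot_comm K x u); nra. Qed.

Lemma in_cone_mono K delta delta' u x :
  0 <= delta <= delta' -> in_cone K delta u x -> in_cone K delta' u x.
Proof.
  unfold in_cone; intros Hd H.
  assert (0 <= dot K u x * dot K u x) by nra.
  assert (delta * delta <= delta' * delta') by nra. nra.
Qed.

Lemma in_cone_scale_r K delta u z x a :
  (forall k, (k <= K)%nat -> x k = a * z k) -> in_cone K delta u z -> in_cone K delta u x.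
Proof.
  unfold in_cone; intros Hx H.
  assert (Hux : dot K u x = a * dot K u z).
  { unfold dot; rewrite <- sum_scal_l; apply sum_eq; intros; rewrite Hx by assumption; ring. }
  assert (Hxx : dot K x x = (a * a) * dot K z z).
  { unfold dot; rewrite <- sum_scal_l; apply sum_eq; intros; rewrite Hx by assumption; ring. }
  rewrite Hux, Hxx. assert (0 <= a * a) by nra.
  replace ((1 + delta * delta) * (a * dot K u z * (a * dot K u z)))
    with ((a * a) * ((1 + delta * delta) * (dot K u z * dot K u z))) by ring.
  replace (dot K u u * (a * a * dot K z z)) with ((a * a) * (dot K u u * dot K z z)) by ring.
  now apply Rmult_le_compat_l.
Qed.

(* [lift m u] maps R^(m+1) isometrically onto the orthogonal complement of u (columns
   1..m+1 of the reflection); [tail_coords m u x] are the coordinates of the projection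
   of x onto that complement. *)
Definition lift (m : nat) (u y : vec) : vec := lin_comb m y (fun j => householder_col u (S j)).

Definition extend (m : nat) (u : vec) (h : nat -> vec) : nat -> vec :=
  fun i => match i with O => u | S j => lift m u (h j) end.

Definition tail_coords (m : nat) (u x : vec) : vec :=
  fun j => dot (S m) (householder_col u (S j)) x.

Lemma lift_ext m u y y' k :
  (forall j, (j <= m)%nat -> y j = y' j) -> lift m u y k = lift m u y' k.
Proof. apply lin_comb_ext. Qed.

Lemma lift_lin_comb m u c h k :
  lift m u (lin_comb m c h) k = lin_comb m c (fun i => lift m u (h i)) k.
Proof. apply lin_comb_lin_comb. Qed.

Section Extend.

Variables (m : nat) (u : vec).
Hypothesis u_unit : dot (S m) u u = 1.

Lemma orthonormal_householder_tail :
  orthonormal_family (S m) m (fun j => householder_col u (S j)).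
Proof. intros i j Hi Hj. apply (orthonormal_householder (S m) u u_unit (S i) (S j)); lia. Qed.

Lemma dot_householder_col0 v : dot (S m) (householder_col u 0) v = dot (S m) u v.
Proof. apply dot_ext; [intros; now apply (householder_col0 (S m)) | reflexivity]. Qed.

Lemma dot_lift y z : dot (S m) (lift m u y) (lift m u z) = dot m y z.
Proof. apply dot_lin_comb_orthonormal, orthonormal_householder_tail. Qed.

Lemma dot_unit_lift y : dot (S m) u (lift m u y) = 0.
Proof.
  unfold lift; rewrite dot_lin_comb_r. apply sum_eq_R0; intros j Hj.
  rewrite <- dot_householder_col0, orthonormal_householder by (assumption || lia).
  rewrite kronecker_neq by lia; ring.
Qed.

Lemma extend_orthonormal h : orthonormal m h -> orthonormal (S m) (extend m u h).
Proof.
  intros Hh [|i] [|j] Hi Hj; simpl.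
  - exact u_unit.
  - apply dot_unit_lift.
  - rewrite dot_comm; apply dot_unit_lift.
  - rewrite dot_lift; apply Hh; lia.
Qed.

Lemma decompose_along_unit x k : (k <= S m)%nat ->
  x k = dot (S m) u x * u k + lift m u (tail_coords m u x) k.
Proof.
  intro Hk. rewrite (householder_expand (S m) u u_unit x k Hk) at 1.
  rewrite lin_comb_S, dot_householder_col0.
  unfold householder_col at 1; rewrite (householder_col0 (S m)) by assumption.
  reflexivity.
Qed.

Lemma parseval_along_unit x :
  dot (S m) x x = dot (S m) u x * dot (S m) u x + dot m (tail_coords m u x) (tail_coords m u x).
Proof.
  set (c := fun j => dot (S m) (householder_col u j) x).
  rewrite (dot_ext (S m) x (lin_comb (S m) c (householder_col u)) x (lin_comb (S m) c (householder_col u)))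
    by (intros; now apply householder_expand).
  rewrite dot_lin_comb_orthonormal, dot_S by (now apply orthonormal_householder).
  unfold c; now rewrite dot_householder_col0.
Qed.

Lemma A_set_extend h e x :
  orthonormal m h -> dot (S m) x x <= 1 -> 0 <= e -> in_cone (S m) e u x ->
  A_set m h e (tail_coords m u x) -> A_set (S m) (extend m u h) e x.
Proof.
  intros Hh Hx He Hcone [c [Hc0 [Hchain Hy]]].
  set (t := dot (S m) u x) in *. set (y := tail_coords m u x) in *.
  pose proof (parseval_along_unit x) as Hpars. fold t y in Hpars.
  unfold in_cone in Hcone; rewrite u_unit in Hcone; fold t in Hcone.
  assert (Hcy : dot m c c = dot m y y).
  { rewrite (dot_ext m y (lin_comb m c h) y (lin_comb m c h)) by assumption.
    symmetry; now apply dot_lin_comb_orthonormal. }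
  pose proof (dot_self_ge0 m y).
  assert (Htail : dot m y y <= e * e * (t * t)) by nra.
  exists (fun i => match i with O => t | S j => c j end). split; [|split].
  - apply Rabs_le_of_sq; lra.
  - intros [|i] Hi.
    + apply Rabs_le_of_sq; [|pose proof (Rabs_pos t); nra].
      pose proof (coord_sq_le_dot m c 0 ltac:(lia)).
      assert (Rabs t * Rabs t = t * t) by (rewrite <- Rabs_mult; apply Rabs_pos_eq; nra).
      nra.
    + apply Hchain; lia.
  - intros k Hk. rewrite (decompose_along_unit x k Hk).
    change (sum_f_R0 _ (S m)) with (lin_comb (S m) (fun i => match i with O => t | S j => c j end) (extend m u h) k).
    rewrite lin_comb_S. simpl. f_equal.
    rewrite (lift_ext m u y (lin_comb m c h)) by assumption.
    apply lift_lin_comb.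
Qed.

End Extend.

(* Coquelicot states its compactness theorem for tuples [Tn k R]. *)
Fixpoint vec_of_Tn (k : nat) : Compactness.Tn k R -> vec :=
  match k with
  | O => fun _ _ => 0
  | S k' => fun x i => match i with O => fst x | S i' => vec_of_Tn k' (snd x) i' end
  end.

Fixpoint Tn_of_vec (k : nat) (a : vec) : Compactness.Tn k R :=
  match k with O => tt | S k' => (a 0%nat, Tn_of_vec k' (fun i => a (S i))) end.

Lemma vec_of_Tn_of_vec k : forall a i, (i < k)%nat -> vec_of_Tn k (Tn_of_vec k a) i = a i.
Proof. induction k as [|k IH]; intros a [|i] Hi; simpl; try lia; auto. rewrite IH; [reflexivity | lia]. Qed.

Lemma bounded_Tn_of_vec k : forall a, (forall i, (i < k)%nat -> -1 <= a i <= 1) ->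
  Compactness.bounded_n k (Tn_of_vec k (fun _ => -1)) (Tn_of_vec k (fun _ => 1)) (Tn_of_vec k a).
Proof. induction k as [|k IH]; intros a Ha; simpl; auto. split; [apply Ha; lia | apply IH; intros; apply Ha; lia]. Qed.

Lemma close_vec_of_Tn k : forall d x t, Compactness.close_n k d x t ->
  forall i, (i < k)%nat -> Rabs (vec_of_Tn k x i - vec_of_Tn k t i) < d.
Proof.
  induction k as [|k IH]; [intros; lia|].
  intros d [x1 x2] [t1 t2] [H1 H2] [|i] Hi; simpl; auto. apply IH; auto; lia.
Qed.

Lemma cube_gauge_cover K (gauge : vec -> posreal) :
  exists P : list vec, forall z, (forall i, (i <= K)%nat -> -1 <= z i <= 1) ->
    exists t, In t P /\ forall i, (i <= K)%nat -> Rabs (z i - t i) < gauge t.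
Proof.
  destruct (NNPP _ (Compactness.compactness_list (S K) (Tn_of_vec (S K) (fun _ => -1))
              (Tn_of_vec (S K) (fun _ => 1)) (fun x => gauge (vec_of_Tn (S K) x)))) as [l Hl].
  exists (map (vec_of_Tn (S K)) l). intros z Hz.
  destruct (Hl (Tn_of_vec (S K) z)) as [t [Ht [_ Hclose]]].
  { apply bounded_Tn_of_vec; intros; apply Hz; lia. }
  exists (vec_of_Tn (S K) t). split; [now apply in_map|].
  intros i Hi. rewrite <- (vec_of_Tn_of_vec (S K) z i) by lia.
  apply close_vec_of_Tn; [assumption | lia].
Qed.

Definition normalize (K : nat) (t : vec) : vec := fun k => t k / sqrt (dot K t t).

Lemma dot_normalize K t : 0 < dot K t t -> dot K (normalize K t) (normalize K t) = 1.
Proof.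
  intro Ht. unfold dot at 1, normalize.
  rewrite (sum_eq _ (fun k => / (sqrt (dot K t t) * sqrt (dot K t t)) * (t k * t k))).
  - rewrite sum_scal_l, sqrt_sqrt by lra. fold (dot K t t). field; lra.
  - intros; field. apply Rgt_not_eq, sqrt_lt_R0, Ht.
Qed.

Lemma normalize_scale K t k : 0 < dot K t t -> t k = sqrt (dot K t t) * normalize K t k.
Proof. intro Ht; unfold normalize; field. apply Rgt_not_eq, sqrt_lt_R0, Ht. Qed.

Lemma in_cone_of_close K delta eps z t :
  dot K z z = 1 -> 0 <= eps <= 1/4 -> 2 * eps <= delta ->
  (forall i, (i <= K)%nat -> Rabs (z i - t i) <= eps / INR (S K)) ->
  0 < dot K t t /\ in_cone K delta t z.
Proof.
  intros Hz Heps Hdelta Hclose.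
  set (d := eps / INR (S K)). set (e := fun i => z i - t i).
  assert (HK : 1 <= INR (S K)) by (rewrite S_INR; pose proof (pos_INR K); lra).
  assert (Hd : d * INR (S K) = eps) by (unfold d; field; lra).
  assert (Hd0 : 0 <= d <= eps).
  { split; [unfold d; apply Rmult_le_pos; [lra | apply Rlt_le, Rinv_0_lt_compat; lra]|]. nra. }
  assert (Hp : Rabs (dot K e z) <= eps).
  { unfold dot; eapply Rle_trans; [apply sum_f_R0_triangle|].
    rewrite <- Hd, <- sum_cte. apply sum_Rle; intros i Hi.
    rewrite Rabs_mult. pose proof (Hclose i Hi).
    assert (Rabs (z i) <= 1).
    { pose proof (coord_sq_le_dot K z i Hi). apply Rabs_le_of_sq; lra. }
    pose proof (Rabs_pos (e i)); pose proof (Rabs_pos (z i)). unfold e; fold d in H. nra. }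
  assert (Hee : dot K e e <= eps * eps).
  { apply Rle_trans with (sum_f_R0 (fun _ => d * d) K).
    - apply sum_Rle; intros i Hi. pose proof (Hclose i Hi) as H. fold d in H.
      apply Rabs_le_bounds in H. unfold e; nra.
    - rewrite sum_cte. nra. }
  assert (Htt : dot K t t = 1 - 2 * dot K e z + dot K e e).
  { rewrite <- Hz. unfold dot. rewrite <- sum_scal_l, <- minus_sum, <- sum_plus.
    apply sum_eq; intros; unfold e; ring. }
  assert (Htz : dot K t z = 1 - dot K e z).
  { rewrite <- Hz. unfold dot. rewrite <- minus_sum. apply sum_eq; intros; unfold e; ring. }
  apply Rabs_le_bounds in Hp. pose proof (dot_self_ge0 K e).
  split; [lra|]. unfold in_cone. rewrite Htt, Htz, Hz.
  assert (eps * eps * 4 <= delta * delta) by nra.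
  assert (9 / 16 <= (1 - dot K e z) * (1 - dot K e z)) by nra.
  nra.
Qed.

Lemma sphere_cone_cover K (delta : vec -> R) : (forall u, 0 < delta u) ->
  exists P : list vec, (forall u, In u P -> dot K u u = 1) /\
    forall x, exists u, In u P /\ in_cone K (delta u) u x.
Proof.
  intro Hdelta.
  set (eps_of := fun t => Rmin (1/4) (delta (normalize K t) / 2)).
  assert (Heps : forall t, 0 < eps_of t / INR (S K)).
  { intro t. apply Rdiv_lt_0_compat; [|apply lt_0_INR; lia].
    apply Rmin_glb_lt; [lra|]. pose proof (Hdelta (normalize K t)); lra. }
  destruct (cube_gauge_cover K (fun t => mkposreal _ (Heps t))) as [P HP].
  set (unit_dec := fun u => if Req_EM_T (dot K u u) 1 then true else false).
  assert (Hsphere : forall z, dot K z z = 1 ->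
            exists u, In u (filter unit_dec (map (normalize K) P)) /\ in_cone K (delta u) u z).
  { intros z Hz. destruct (HP z) as [t [Ht Hclose]].
    { intros i Hi. pose proof (coord_sq_le_dot K z i Hi). nra. }
    destruct (in_cone_of_close K (delta (normalize K t)) (eps_of t) z t Hz) as [Htt Hcone].
    - split; [apply Rmin_glb; pose proof (Hdelta (normalize K t)); lra | apply Rmin_l].
    - unfold eps_of; pose proof (Rmin_r (1/4) (delta (normalize K t) / 2)); lra.
    - intros i Hi; apply Rlt_le, Hclose, Hi.
    - exists (normalize K t). split.
      + apply filter_In; split; [now apply in_map|].
        unfold unit_dec; rewrite dot_normalize by assumption.
        destruct (Req_EM_T 1 1); [reflexivity | contradiction].
      + apply in_cone_comm, (in_cone_scale_r K _ z t _ (/ sqrt (dot K t t))), in_cone_comm, Hcone.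
        intros; unfold normalize, Rdiv; ring. }
  exists (filter unit_dec (map (normalize K) P)). split.
  - intros u Hu. apply filter_In in Hu as [_ Hu]. unfold unit_dec in Hu.
    destruct (Req_EM_T (dot K u u) 1); [assumption | discriminate].
  - intro x. destruct (Req_dec (dot K x x) 0) as [Hx0|Hx0].
    + destruct (Hsphere (kronecker 0)) as [u [Hu _]].
      { unfold dot. rewrite (sum_kronecker_l (kronecker 0)) by lia. apply kronecker_diag. }
      exists u; split; [assumption|]. unfold in_cone; rewrite Hx0.
      pose proof (Hdelta u). assert (0 <= dot K u x * dot K u x) by nra. nra.
    + pose proof (dot_self_ge0 K x).
      destruct (Hsphere (normalize K x)) as [u [Hu Hcone]]; [apply dot_normalize; lra|].
      exists u; split; [assumption|].
      apply (in_cone_scale_r K _ u (normalize K x) x (sqrt (dot K x x))); [|assumption].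
      intros; apply normalize_scale; lra.
Qed.

Definition finite_A_cover (m : nat) : Prop :=
  forall eps : (nat -> vec) -> R, (forall b, 0 < eps b) ->
  exists L : list (nat -> vec), (forall b, In b L -> orthonormal m b) /\
    forall x, dot m x x <= 1 -> exists b, In b L /\ A_set m b (eps b) x.

Lemma fold_Rmin_pos (l : list R) : (forall x, In x l -> 0 < x) -> 0 < fold_right Rmin 1 l.
Proof.
  induction l as [|a l IH]; simpl; intro H; [lra|].
  apply Rmin_glb_lt; [apply H | apply IH]; auto.
Qed.

Lemma fold_Rmin_le (l : list R) x : In x l -> fold_right Rmin 1 l <= x.
Proof.
  induction l as [|a l IH]; simpl; [intros []|intros [<-|H]]; [apply Rmin_l|].
  eapply Rle_trans; [apply Rmin_r | auto].
Qed.

Lemma finite_A_cover_0 : finite_A_cover 0.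
Proof.
  intros eps _. exists ((fun _ _ => 1) :: nil). split.
  - intros b [<-|[]] [|] [|] Hi Hj; try lia. compute; ring.
  - intros x Hx. exists (fun _ _ => 1). split; [now left|].
    exists x. split; [|split].
    + apply Rabs_le_of_sq; [unfold dot in Hx; simpl in Hx|]; lra.
    + intros; lia.
    + intros [|k] Hk; [simpl; ring | lia].
Qed.

Lemma finite_A_cover_S m : finite_A_cover m -> finite_A_cover (S m).
Proof.
  intros IH eps Heps.
  set (eps_at := fun u h => eps (extend m u h)).
  destruct (choice (fun u L => (forall h, In h L -> orthonormal m h) /\
              forall y, dot m y y <= 1 -> exists h, In h L /\ A_set m h (eps_at u h) y))
    as [Lf HLf].
  { intro u. apply IH. intro h; apply Heps. }
  set (delta := fun u => fold_right Rmin 1 (map (eps_at u) (Lf u))).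
  assert (Hdelta : forall u, 0 < delta u).
  { intro u. apply fold_Rmin_pos. intros r Hr. apply in_map_iff in Hr as [h [<- _]]. apply Heps. }
  destruct (sphere_cone_cover (S m) delta Hdelta) as [P [HPunit HP]].
  exists (flat_map (fun u => map (extend m u) (Lf u)) P). split.
  - intros b Hb. apply in_flat_map in Hb as [u [Hu Hb]]. apply in_map_iff in Hb as [h [<- Hh]].
    apply extend_orthonormal; [now apply HPunit | now apply (proj1 (HLf u))].
  - intros x Hx. destruct (HP x) as [u [Hu Hcone]].
    pose proof (parseval_along_unit m u (HPunit u Hu) x).
    destruct (proj2 (HLf u) (tail_coords m u x)) as [h [Hh HA]].
    { pose proof (Rle_0_sqr (dot (S m) u x)); unfold Rsqr in *; lra. }
    exists (extend m u h). split.
    + apply in_flat_map. exists u. split; [assumption | now apply in_map].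
    + apply (A_set_extend m u (HPunit u Hu) h (eps_at u h));
        [now apply (proj1 (HLf u)) | assumption | apply Rlt_le, Heps | | assumption].
      apply (in_cone_mono _ (delta u)); [|assumption].
      split; [now apply Rlt_le | apply fold_Rmin_le, in_map, Hh].
Qed.

Lemma finite_A_cover_all m : finite_A_cover m.
Proof. induction m; [apply finite_A_cover_0 | now apply finite_A_cover_S]. Qed.

Lemma dot_le_1_of_norm_le_1 n x : norm n x <= 1 -> dot n x x <= 1.
Proof.
  unfold norm; intro Hx. pose proof (dot_self_ge0 n x). pose proof (sqrt_pos (dot n x x)).
  rewrite <- (sqrt_sqrt (dot n x x)) by assumption. nra.
Qed.

Theorem lemma2p4 (n : nat) (hn : (1 <= n)%nat) (eps : (nat -> vec) -> R)
  (heps : forall b : nat -> vec, orthonormal n b -> 0 < eps b) :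
  exists L : list (nat -> vec),
    (forall b, In b L -> orthonormal n b) /\
    (forall x : vec, norm n x <= 1 ->
       exists b, In b L /\ A_set n b (eps b) x).
Proof.
  set (eps_pos := fun b => if Rlt_dec 0 (eps b) then eps b else 1).
  destruct (finite_A_cover_all n eps_pos) as [L [HL Hcover]].
  { intro b; unfold eps_pos; destruct (Rlt_dec 0 (eps b)); lra. }
  exists L. split; [assumption|].
  intros x Hx. destruct (Hcover x (dot_le_1_of_norm_le_1 n x Hx)) as [b [Hb HA]].
  exists b. split; [assumption|].
  unfold eps_pos in HA. destruct (Rlt_dec 0 (eps b)) as [_|Hneg]; [assumption|].
  exfalso; apply Hneg, heps, HL, Hb.
Qed.
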